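(* Let $y_t=\theta_t+Z_t$, $t=1,\dots,n$, where $Z_t$ are independent zero-mean $\sigma$-subgaussian random variables, and let $\beta>0$. For any interval $[t_h,t_l]\subseteq[1,n]$, let $Y=pad_0(y_{t_h},\dots,y_{t_l})$ and $\Theta=pad_0(\theta_{t_h},\dots,\theta_{t_l})$. Then for each coordinate $i$, $|(T(HY))_i|\le|(H\Theta)_i|$ with probability at least $1-2n^{3-\beta/8}$.
   Context: $pad_0(v_a,\dots,v_b)$ is the vector $(v_a-\bar v,\dots,v_b-\bar v)$ with $\bar v$ the average of $v_a,\dots,v_b$, followed by zeros up to length $k$, the smallest power of $2$ that is $\ge b-a+1$. $H\in\mathbb{R}^{k\times k}$ is the orthonormal discrete Haar wavelet transform matrix. $T$ is coordinatewise soft thresholding at level $\lambda=\sigma\sqrt{\beta\log n}$: $T(u)_i=\mathrm{sign}(u_i)\max(|u_i|-\lambda,0)$. *)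

From HB Require Import structures.
From mathcomp Require Import all_boot all_order all_algebra.
From mathcomp Require Import all_classical all_reals all_analysis.
Set Implicit Arguments. Unset Strict Implicit. Unset Printing Implicit Defensive.
Import Order.TTheory GRing.Theory Num.Theory.
Local Open Scope classical_set_scope.
Local Open Scope ring_scope.

(* Length of the padded vector for the interval [th, tl]:
   k = 2 ^ (up_log 2 m), the smallest power of 2 that is >= m = tl - th + 1. *)
Definition padexp (th tl : nat) : nat := up_log 2 (tl - th).+1.
Definition padk (th tl : nat) : nat := 2 ^ padexp th tl.

Definition ext {R : realType} (n : nat) (v : 'I_n -> R) (t : nat) : R :=
  match insub t with Some i => v i | None => 0 end.

Definition pad0 {R : realType} (v : nat -> R) (th tl : nat) : 'cV[R]_(padk th tl) :=
  let m := (tl - th).+1 in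
  let avg := (\sum_(th <= t < tl.+1) v t) / m%:R in
  \col_(s < padk th tl) (if (s < m)%N then v (th + s)%N - avg else 0).

(* Orthonormal discrete Haar wavelet transform matrix of size 2^J.
   Row r = 2^j + m (1 <= r, 0 <= m < 2^j): the Haar wavelet at level j, shift m,
   supported on the block [m L, (m+1) L) with L = 2^(J-j), equal to
   +1/sqrt L on the first half of the block and -1/sqrt L on the second half. *)
Definition haar_entry {R : realType} (J r s : nat) : R :=
  if r == 0%N then 1 / Num.sqrt ((2 ^ J)%:R)
  else
    let j := trunc_log 2 r in
    let m := (r - 2 ^ j)%N in
    let L := (2 ^ (J - j))%N in
    if (m * L <= s < m * L + L./2)%N then 1 / Num.sqrt (L%:R)
    else if (m * L + L./2 <= s < m * L + L)%N then - (1 / Num.sqrt (L%:R))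
    else 0.

Definition haar {R : realType} (J : nat) : 'M[R]_(2 ^ J) :=
  \matrix_(r, s) @haar_entry R J r s.

Definition soft {R : realType} (lam : R) (k : nat) (u : 'cV[R]_k) : 'cV[R]_k :=
  \col_i (Num.sg (u i 0) * Num.max (`|u i 0| - lam) 0).

Definition mutually_independent {R : realType} {d : measure_display}
  {T : measurableType d} (P : probability T R) (n : nat)
  (X : 'I_n -> T -> R) : Prop :=
  forall B : 'I_n -> set R, (forall i, measurable (B i)) ->
    P (\bigcap_(i in [set: 'I_n]) (X i @^-1` B i)) =
    (\prod_(i < n) P (X i @^-1` B i))%E.

Definition subgaussian {R : realType} {d : measure_display}
  {T : measurableType d} (P : probability T R) (sigma : R) (X : T -> R) : Prop :=
  forall lam : R,
    ('E_P[fun w => expR (lam * X w)] <= (expR (lam ^+ 2 * sigma ^+ 2 / 2))%:E)%E.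

From HB Require Import structures.
From mathcomp Require Import all_boot all_order all_algebra.
From mathcomp Require Import all_classical all_reals all_analysis.
From mathcomp Require Import measurable_realfun measurable_fun_approximation.
From mathcomp Require Import ring lra zify.
Set Implicit Arguments.
Unset Strict Implicit.
Unset Printing Implicit Defensive.
Import Order.TTheory GRing.Theory Num.Theory.
Import numFieldNormedType.Exports.
Local Open Scope classical_set_scope.
Local Open Scope ring_scope.

(* The i-th Haar coefficient of the padded data is u + X, where u is the
   coefficient of the padded signal and X = sum_t a_t Z_t, the weights a_t
   being the i-th Haar row centred over the window [th, tl]. Centring does not
   increase the Euclidean norm and Haar rows have norm at most one, so
   sum_t a_t^2 <= 1. Soft thresholding at level lam keeps |T(u + X)| <= |u| as
   soon as |X| <= lam. By independence the moment generating function of X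
   factorises, hence X is again sigma-subgaussian, and Chernoff bounds on both
   tails give P(|X| > lam) <= 2 exp(-lam^2 / 2 sigma^2) = 2 n^(-beta/2), which
   is below 2 n^(3 - beta/8). Independence is only assumed for events; it
   reaches exponential moments through monotone approximation by simple
   functions. *)

Lemma measurable_le_set d (T : measurableType d) (R : realType) (f g : T -> R) :
  measurable_fun setT f -> measurable_fun setT g ->
  measurable [set w | f w <= g w].
Proof.
by move=> mf mg; rewrite -[X in measurable X]setTI; exact: measurable_fun_le.
Qed.

(** * Independence and exponential moments *)

Lemma lee_prod (R : realType) (I : Type) (r : seq I) (x y : I -> \bar R) :
  (forall i, (0 <= x i)%E) -> (forall i, (x i <= y i)%E) ->
  (\prod_(i <- r) x i <= \prod_(i <- r) y i)%E.
Proof.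
move=> x0 xy; elim: r => [|i r IH]; rewrite ?big_nil ?big_cons //.
by apply: lee_pmul => //; exact: prode_ge0.
Qed.

Lemma prod_sum_indic (R : realType) (T : Type) (I J : finType)
    (a : I -> J -> R) (A : I -> J -> set T) (w : T) :
  \prod_i \sum_j a i j * \1_(A i j) w =
  \sum_(g : {ffun I -> J}) (\prod_i a i (g i)) *
    \1_(\bigcap_(i in [set: I]) A i (g i)) w.
Proof.
rewrite bigA_distr_bigA; apply: eq_bigr => g _.
rewrite big_split /=; congr (_ * _).
have [Aw|nAw] := pselect ((\bigcap_(i in [set: I]) A i (g i)) w).
  rewrite indicE mem_set // big1 // => i _.
  by rewrite indicE mem_set //; exact: Aw.
have [i nAiw] : exists i, ~ A i (g i) w.
  by apply/existsNP => Aiw; apply: nAw => i _; exact: Aiw.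
by rewrite indicE memNset // (bigD1 i) //= indicE memNset // mul0r.
Qed.

Lemma integral_sum_indic (R : realType) d (T : measurableType d)
    (mu : {measure set T -> \bar R}) (J : finType)
    (c : J -> R) (A : J -> set T) :
  (forall j, 0 <= c j) -> (forall j, measurable (A j)) ->
  (\int[mu]_w (\sum_j c j * \1_(A j) w)%:E = \sum_j (c j)%:E * mu (A j))%E.
Proof.
move=> c0 mA; under eq_integral do rewrite -sumEFin.
have mcA j : measurable_fun setT (fun w => (c j * \1_(A j) w)%:E).
  by apply/measurable_EFinP/measurable_funM => //; exact: measurable_indic.
have cA0 j w : setT w -> (0 <= (c j * \1_(A j) w)%:E)%E.
  by rewrite lee_fin mulr_ge0.
rewrite ge0_integral_sum //.
apply: eq_bigr => j _; under eq_integral do rewrite EFinM.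
rewrite ge0_integralZl ?lee_fin //; first by rewrite integral_indic // setIT.
exact/measurable_EFinP/measurable_indic.
Qed.

Section approx_as_simple_function.
Context d (T : measurableType d) (R : realType).

Definition approx_coef (k j : nat) : R :=
  if (j < k * 2 ^ k)%N then j%:R * 2 ^- k else k%:R.

Definition approx_set (f : T -> \bar R) (k j : nat) : set T :=
  if (j < k * 2 ^ k)%N then dyadic_approx setT f k j
  else integer_approx setT f k.

Lemma approx_coef_ge0 k j : 0 <= approx_coef k j.
Proof. by rewrite /approx_coef; case: ifP. Qed.

Lemma measurable_approx_set f k j :
  measurable_fun setT f -> measurable (approx_set f k j).
Proof.
move=> mf; rewrite /approx_set.
case: ifP => _; last exact: emeasurable_fun_c_infty.
rewrite /dyadic_approx; case: ifP => // _; rewrite -preimage_comp.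
by apply: mf => //; apply/measurable_image_EFin; exact: measurable_itv.
Qed.

Lemma approxE f k x :
  approx setT f k x =
  \sum_(j < (k * 2 ^ k).+1) approx_coef k j * \1_(approx_set f k j) x.
Proof.
rewrite /approx big_ord_recr /= /approx_coef /approx_set ltnn; congr (_ + _).
by apply: eq_bigr => j _; rewrite /= ltn_ord.
Qed.

Lemma approx_ge0 (f : T -> \bar R) k x : 0 <= approx setT f k x.
Proof.
by rewrite approxE; apply: sumr_ge0 => j _; rewrite mulr_ge0 ?approx_coef_ge0.
Qed.

Lemma measurable_approx (f : T -> \bar R) k :
  measurable_fun setT f -> measurable_fun setT (approx setT f k).
Proof.
move=> mf; rewrite (funext (approxE f k)).
apply: measurable_sum => j; apply: measurable_funM => //.
exact/measurable_indic/measurable_approx_set.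
Qed.

End approx_as_simple_function.

Section independent_family.
Context (R : realType) d (T : measurableType d) (P : probability T R).
Variables (n : nat) (Z : 'I_n -> T -> R).
Hypothesis mZ : forall t, measurable_fun setT (Z t).
Hypothesis indepZ : mutually_independent P Z.

Let finite_prob (A : set T) : measurable A -> P A = (fine (P A))%:E.
Proof. by move=> mA; rewrite fineK // fin_num_measure. Qed.

Lemma indep_integral_prod_simple (J : finType) (a : 'I_n -> J -> R)
    (S : 'I_n -> J -> set R) :
  (forall t j, 0 <= a t j) -> (forall t j, measurable (S t j)) ->
  (\int[P]_w (\prod_t \sum_j a t j * \1_(S t j) (Z t w))%:E =
   \prod_t \int[P]_w (\sum_j a t j * \1_(S t j) (Z t w))%:E)%E.
Proof.
move=> a0 mS; pose A t j := Z t @^-1` S t j.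
have mA t j : measurable (A t j) by rewrite -[A t j]setTI; exact: mZ.
rewrite (eq_integral (fun w => (\sum_(g : {ffun _ -> J}) (\prod_t a t (g t)) *
    \1_(\bigcap_(t in [set: 'I_n]) A t (g t)) w)%:E)); last first.
  by move=> w _; rewrite -prod_sum_indic.
rewrite integral_sum_indic; first last.
- by move=> g; apply: fin_bigcap_measurable => //; exact: finite_finset.
- by move=> g; exact: prodr_ge0.
under eq_bigr => g _ do rewrite /A /= indepZ //
  (eq_bigr _ (fun t _ => finite_prob (mA t (g t)))) prodEFin -EFinM.
under [RHS]eq_bigr => t _ do rewrite (integral_sum_indic P (a0 t) (mA t))
  (eq_bigr _ (fun j _ => congr1 _ (finite_prob (mA t j)))) /= sumEFin.
rewrite sumEFin prodEFin bigA_distr_bigA /=.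
by congr EFin; apply: eq_bigr => g _; rewrite big_split.
Qed.

Lemma indep_integral_prod_approx (g : 'I_n -> R -> \bar R) k :
  (forall t, measurable_fun setT (g t)) ->
  (\int[P]_w (\prod_t approx setT (g t) k (Z t w))%:E =
   \prod_t \int[P]_w (approx setT (g t) k (Z t w))%:E)%E.
Proof.
move=> mg; under eq_integral do rewrite (eq_bigr _ (fun t _ => approxE _ k _)).
rewrite (indep_integral_prod_simple
  (fun t (j : 'I_(k * 2 ^ k).+1) => approx_coef_ge0 R k j)
  (fun t (j : 'I_(k * 2 ^ k).+1) => measurable_approx_set k j (mg t))).
by apply: eq_bigr => t _; apply: eq_integral => w _; rewrite approxE.
Qed.

Lemma indep_integral_prod_le (f : 'I_n -> R -> R) :
  (forall t x, 0 <= f t x) -> (forall t, measurable_fun setT (f t)) ->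
  (\int[P]_w (\prod_t f t (Z t w))%:E <=
   \prod_t \int[P]_w (f t (Z t w))%:E)%E.
Proof.
move=> f0 mf; pose g t := EFin \o f t.
have mg t : measurable_fun setT (g t) by exact/measurable_EFinP.
have g0 t x : setT x -> (0 <= g t x)%E by rewrite lee_fin.
pose phi k w := \prod_t approx setT (g t) k (Z t w).
have mphi k : measurable_fun setT (fun w => (phi k w)%:E).
  apply/measurable_EFinP/measurable_prod => t _.
  exact: measurableT_comp (measurable_approx k (mg t)) (mZ t).
have phi0 k w : (0 <= (phi k w)%:E)%E.
  by rewrite lee_fin; apply: prodr_ge0 => t _; exact: approx_ge0.
have nd_phi w :
    {homo (fun k => (phi k w)%:E) : k l / (k <= l)%N >-> (k <= l)%E}.
  move=> k l kl; rewrite lee_fin; apply: ler_prod => t _.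
  by rewrite approx_ge0 /=; move: (nd_approx setT (g t) kl) => /lefP; exact.
have phi_lim w : limn (fun k => (phi k w)%:E) = (\prod_t f t (Z t w))%:E.
  apply: cvg_lim => //; apply: cvg_EFin; first exact: nearW.
  apply: cvg_big => //; first exact: mul_continuous.
  by move=> t _; exact: (cvg_approx (g0 t) Logic.I (ltry _)).
rewrite (eq_integral (fun w => limn (fun k => (phi k w)%:E))); last first.
  by move=> w _; rewrite phi_lim.
rewrite (monotone_convergence P measurableT mphi (fun k w _ => phi0 k w)
  (fun w _ => nd_phi w)).
apply: lime_le.
  apply: ereal_nondecreasing_is_cvgn => k l kl.
  by apply: ge0_le_integral => // w _; exact: nd_phi.
apply: nearW => k; rewrite /phi indep_integral_prod_approx //.
apply: lee_prod => t.
  by apply: integral_ge0 => w _; rewrite lee_fin approx_ge0.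
apply: ge0_le_integral => //.
- by move=> w _; rewrite lee_fin approx_ge0.
- apply/measurable_EFinP.
  exact: measurableT_comp (measurable_approx k (mg t)) (mZ t).
- exact/measurable_EFinP/measurableT_comp.
- by move=> w _; exact: (le_approx k (g0 t)).
Qed.

End independent_family.

Definition lincomb {R : realType} {d} {T : measurableType d} {n : nat}
    (Z : 'I_n -> {mfun T >-> R}) (a : 'I_n -> R) : T -> R :=
  fun w => \sum_t a t * Z t w.

Lemma measurable_lincomb (R : realType) d (T : measurableType d) n
    (Z : 'I_n -> {mfun T >-> R}) (a : 'I_n -> R) :
  measurable_fun setT (lincomb Z a).
Proof. by apply: measurable_sum => t; exact: measurable_funM. Qed.

HB.instance Definition _ (R : realType) d (T : measurableType d) n
    (Z : 'I_n -> {mfun T >-> R}) (a : 'I_n -> R) :=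
  isMeasurableFun.Build _ _ _ _ (lincomb Z a) (measurable_lincomb Z a).

(** * Subgaussian tails *)

Section subgaussian.
Context (R : realType) d (T : measurableType d) (P : probability T R).

Lemma subgaussianN (sigma : R) (X : T -> R) :
  subgaussian P sigma X -> subgaussian P sigma (\- X).
Proof.
move=> sgX lam; rewrite -[lam ^+ 2]sqrrN.
rewrite (_ : (fun w => _) = fun w => expR (- lam * X w)); first exact: sgX.
by apply: funext => w; rewrite /= mulrN mulNr.
Qed.

Lemma subgaussian_lincomb n (Z : 'I_n -> {mfun T >-> R}) (sigma : R)
    (a : 'I_n -> R) :
  mutually_independent P (fun t => (Z t : T -> R)) ->
  (forall t, subgaussian P sigma (Z t)) -> \sum_t a t ^+ 2 <= 1 ->
  subgaussian P sigma (lincomb Z a).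
Proof.
move=> indepZ sgZ a1 r; rewrite unlock.
under eq_integral do rewrite /lincomb mulr_sumr expR_sum.
have mZ t : measurable_fun setT (Z t) by exact: measurable_funPT.
apply: le_trans (indep_integral_prod_le mZ indepZ
  (f := fun t x => expR (r * (a t * x))) _ _) _.
- by move=> t x; exact: expR_ge0.
- by move=> t; apply: measurableT_comp => //; exact: measurable_funM.
apply: (@le_trans _ _
  (\prod_t (expR ((r * a t) ^+ 2 * sigma ^+ 2 / 2))%:E)%E).
  apply: lee_prod => t.
    by apply: integral_ge0 => w _; rewrite lee_fin expR_ge0.
  have := sgZ t (r * a t); rewrite unlock.
  by under eq_integral do rewrite -mulrA.
rewrite prodEFin -expR_sum lee_fin ler_expR.
rewrite (eq_bigr (fun t => r ^+ 2 * sigma ^+ 2 / 2 * a t ^+ 2)); last first.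
  by move=> t _; ring.
have c_ge0 : 0 <= r ^+ 2 * sigma ^+ 2 / 2.
  exact: divr_ge0 (mulr_ge0 (sqr_ge0 r) (sqr_ge0 sigma)) (ler0n _ 2).
by rewrite -mulr_sumr -[leRHS]mulr1 ler_wpM2l.
Qed.

Lemma subgaussian_tail (X : {RV P >-> R}) (sigma lam : R) :
  0 < sigma -> 0 < lam -> subgaussian P sigma X ->
  (P [set w | (lam <= X w)%R] <=
   (expR (- (lam ^+ 2 / (2 * sigma ^+ 2))))%:E)%E.
Proof.
move=> sigma_gt0 lam_gt0 sgX; pose mu := lam / sigma ^+ 2.
have mu_gt0 : 0 < mu by rewrite divr_gt0 // exprn_gt0.
apply: le_trans (chernoff X lam mu_gt0) _.
have mgfX : ('M_P X mu <= (expR (mu ^+ 2 * sigma ^+ 2 / 2))%:E)%E.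
  rewrite /mmt_gen_fun (_ : _ \o _ = fun w => expR (mu * X w)).
    exact: sgX.
  by apply: funext => w; rewrite /= mulrC.
apply: le_trans (lee_wpmul2r _ mgfX) _; first by rewrite lee_fin expR_ge0.
rewrite -EFinM -expRD (_ : _ + _ = - (lam ^+ 2 / (2 * sigma ^+ 2))) //.
by rewrite /mu; field; rewrite gt_eqF.
Qed.

Lemma subgaussian_abs_tail (X : {RV P >-> R}) (sigma lam : R) :
  0 < sigma -> 0 <= lam -> subgaussian P sigma X ->
  ((1 - 2 * expR (- (lam ^+ 2 / (2 * sigma ^+ 2))))%:E <=
   P [set w | (`|X w| <= lam)%R])%E.
Proof.
move=> sigma_gt0; rewrite le_eqVlt => /predU1P[<- _|lam_gt0 sgX].
  rewrite expr0n /= mul0r oppr0 expR0.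
  by rewrite (le_trans _ (measure_ge0 _ _)) // lee_fin; lra.
set q := expR _; set G := [set w | _].
pose A := [set w | lam <= X w]; pose B := [set w | lam <= (\- X) w].
have mX : measurable_fun setT X by exact: measurable_funPT.
have mG : measurable G.
  by apply: measurable_le_set => //; exact: measurableT_comp.
have mA : measurable A by exact: measurable_le_set.
have mB : measurable B.
  by apply: measurable_le_set => //; exact: measurableT_comp.
have GAB : [set: T] = G `|` (A `|` B).
  apply/seteqP; split => // w _; rewrite /G /A /B /=.
  have [Xl|Xl] := leP `|X w| lam; first by left.
  by right; move: Xl; case: (ler0P (X w)) => _ /ltW; [right|left].
have PA : (P A <= q%:E)%E by exact: subgaussian_tail.
have PB : (P B <= q%:E)%E by apply: subgaussian_tail => //; exact: subgaussianN.
have := probability_setT P; rewrite GAB => P1.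
have : (1 <= P G + (q + q)%:E)%E.
  rewrite -P1 EFinD; apply: le_trans (measureU2 _ mG (measurableU _ _ mA mB)) _.
  by apply: leeD2l; apply: le_trans (measureU2 _ mA mB) _; exact: leeD.
rewrite -(fineK (fin_num_measure P _ mG)) -EFinD !lee_fin; lra.
Qed.

End subgaussian.

(** * Haar coefficients of padded windows *)

Section centring.
Variable R : realFieldType.

Definition mean (m : nat) (x : nat -> R) : R := (\sum_(0 <= s < m) x s) / m%:R.

Lemma sum_mul_centred m (x y : nat -> R) :
  \sum_(0 <= s < m) x s * (y s - mean m y) =
  \sum_(0 <= s < m) (x s - mean m x) * y s.
Proof.
rewrite /mean; under eq_bigr do rewrite mulrBr.
under [RHS]eq_bigr do rewrite mulrBl.
by rewrite !sumrB -mulr_suml -mulr_sumr; congr (_ - _); ring.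
Qed.

Lemma sum_sqr_centred_le m (x : nat -> R) :
  \sum_(0 <= s < m) (x s - mean m x) ^+ 2 <= \sum_(0 <= s < m) x s ^+ 2.
Proof.
case: m => [|m]; first by rewrite !big_geq.
set mu := mean m.+1 x.
have sumE : \sum_(0 <= s < m.+1) x s = mu * m.+1%:R by rewrite divfK ?pnatr_eq0.
have sqrE s : (x s - mu) ^+ 2 = x s ^+ 2 - mu * (2 * x s - mu) by ring.
rewrite (eq_bigr _ (fun s _ => sqrE s)) sumrB -mulr_sumr sumrB -mulr_sumr.
rewrite sumr_const_nat subn0 sumE lerBlDr lerDl.
have -> : mu * (2 * (mu * m.+1%:R) - mu *+ m.+1) = mu ^+ 2 * m.+1%:R by ring.
by rewrite mulr_ge0 ?sqr_ge0.
Qed.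

End centring.

Lemma sum_block_le (R : numDomainType) (c : R) (a L N : nat) : 0 <= c ->
  \sum_(0 <= s < N) (if (a <= s < a + L)%N then c else 0) <= c *+ L.
Proof.
move=> c0; pose F s := if (a <= s < a + L)%N then c else 0.
change (\sum_(0 <= s < N) F s <= c *+ L).
apply: (@le_trans _ _ (\sum_(0 <= s < N + (a + L)) F s)).
  rewrite [leRHS](@big_cat_nat _ _ _ N) ?leq_addr //= lerDl.
  by apply: sumr_ge0 => s _; rewrite /F; case: ifP.
rewrite (@big_cat_nat _ _ _ a) ?leq_addr //=; last by lia.
rewrite (@big_cat_nat _ _ _ (a + L) a) ?leq_addr ?leq_addl //=.
rewrite big1_seq ?add0r => [|s]; last first.
  by rewrite mem_index_iota /F => /andP[_ /andP[_ lt_sa]]; rewrite leqNgt lt_sa.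
rewrite [X in _ + X]big1_seq ?addr0 => [|s]; last first.
  rewrite mem_index_iota /F => /andP[_ /andP[le_aLs _]].
  by rewrite ltnNge le_aLs andbF.
rewrite (eq_big_nat _ _ (F2 := fun => c)) => [|s /andP[]]; last first.
  by rewrite /F => -> ->.
by rewrite sumr_const_nat addKn.
Qed.

Lemma haar_row_norm_le1 (R : realType) (J r : nat) :
  \sum_(0 <= s < 2 ^ J) (@haar_entry R J r s) ^+ 2 <= 1.
Proof.
have inv_sqrt (N : nat) : (1 / Num.sqrt N%:R) ^+ 2 = N%:R^-1 :> R.
  by rewrite expr_div_n expr1n sqr_sqrtr // div1r.
rewrite /haar_entry; case: eqP => [_|_].
  under eq_bigr do rewrite inv_sqrt.
  by rewrite sumr_const_nat subn0 -(mulr_natr (_^-1)) mulVf //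
    pnatr_eq0 expn_eq0.
set j := trunc_log 2 r; set m := (r - 2 ^ j)%N; set L := (2 ^ (J - j))%N.
apply: (@le_trans _ _
  (\sum_(0 <= s < 2 ^ J) (if (m * L <= s < m * L + L)%N then L%:R^-1 else 0))).
  apply: ler_sum_nat => s _; case: ifPn => [/andP[lo hi]|_].
    rewrite inv_sqrt lo (leq_trans hi) // leq_add2l.
    by rewrite leq_half_double -addnn leqW // leq_addr.
  case: ifPn => [/andP[lo hi]|_].
    by rewrite sqrrN inv_sqrt hi andbT (leq_trans _ lo) // leq_addr.
  by rewrite expr2 mul0r; case: ifP => // _; rewrite invr_ge0.
have Linv_ge0 : 0 <= L%:R^-1 :> R by rewrite invr_ge0.
apply: le_trans (sum_block_le _ _ _ Linv_ge0) _.
by rewrite -(mulr_natr (_^-1)) mulVf // pnatr_eq0 expn_eq0.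
Qed.

Definition centred_haar_row (R : realType) (th tl i s : nat) : R :=
  haar_entry (padexp th tl) i s -
  mean (tl - th).+1 (@haar_entry R (padexp th tl) i).

Definition window (R : realType) (th tl : nat) (b : nat -> R) (t : nat) : R :=
  if (th <= t <= tl)%N then b (t - th)%N else 0.

Lemma window_le_padk th tl : ((tl - th).+1 <= padk th tl)%N.
Proof. exact: up_logP. Qed.

Lemma centred_haar_row_norm_le1 (R : realType) th tl i :
  \sum_(0 <= s < (tl - th).+1) @centred_haar_row R th tl i s ^+ 2 <= 1.
Proof.
apply: le_trans (sum_sqr_centred_le _ _) _.
apply: le_trans (haar_row_norm_le1 R (padexp th tl) i).
rewrite [leRHS](@big_cat_nat _ _ _ (tl - th).+1) ?window_le_padk //= lerDl.
by apply: sumr_ge0 => s _; exact: sqr_ge0.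
Qed.

Lemma haar_pad0E (R : realType) (v : nat -> R) th tl (i : 'I_(padk th tl)) :
  (th <= tl)%N ->
  (haar (padexp th tl) *m pad0 v th tl) i 0 =
  \sum_(0 <= s < (tl - th).+1) centred_haar_row R th tl i s * v (th + s)%N.
Proof.
move=> le_th_tl.
have avgE : (\sum_(th <= t < tl.+1) v t) / (tl - th).+1%:R =
            mean (tl - th).+1 (fun s => v (th + s)%N).
  rewrite /mean -{1}(add0n th) big_addn subSn //.
  by congr (_ / _); apply: eq_bigr => s _; rewrite addnC.
rewrite -sum_mul_centred mxE (big_nat_widen _ _ _ _ _ (window_le_padk th tl)).
rewrite big_mkord [RHS]big_mkcond /=.
by apply: eq_bigr => s _; rewrite !mxE avgE; case: ifP; rewrite ?mulr0.
Qed.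

Lemma ext_add (R : realType) n (u v : 'I_n -> R) (t : nat) :
  ext (fun i => u i + v i) t = ext u t + ext v t.
Proof. by rewrite /ext; case: insub => [i|] //; rewrite addr0. Qed.

Section window_of_a_sample.
Variables (R : realType) (n th tl : nat).
Hypotheses (le_th_tl : (th <= tl)%N) (lt_tl_n : (tl < n)%N).

Lemma sum_window_ext (b : nat -> R) (z : 'I_n -> R) :
  \sum_(0 <= s < (tl - th).+1) b s * ext z (th + s) =
  \sum_(t < n) window th tl b t * z t.
Proof.
pose G t := window th tl b t * ext z t.
rewrite [RHS](eq_bigr (G \o val)) => [|t _]; last by rewrite /G /= /ext valK.
rewrite -(big_mkord xpredT G) [RHS](@big_cat_nat _ _ _ th) //=; last by lia.
rewrite [in RHS](@big_cat_nat _ _ _ tl.+1 th) //=; last by lia.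
rewrite [X in _ = X + _]big1_seq ?add0r => [|t]; last first.
  rewrite mem_index_iota /G /window => /andP[_ /andP[_ lt_t_th]].
  by rewrite leqNgt lt_t_th mul0r.
rewrite [X in _ = _ + X]big1_seq ?addr0 => [|t]; last first.
  rewrite mem_index_iota /G /window => /andP[_ /andP[lt_tl_t _]].
  by rewrite (leqNgt t tl) lt_tl_t andbF mul0r.
rewrite [RHS](big_addn 0 _ th) subSn //; apply: eq_big_nat => s /andP[_ lt_s].
have le_s : (s + th <= tl)%N by lia.
by rewrite /G /window addnK leq_addl le_s [(s + th)%N]addnC.
Qed.

Lemma sum_window_sqr (b : nat -> R) :
  \sum_(t < n) window th tl b t ^+ 2 = \sum_(0 <= s < (tl - th).+1) b s ^+ 2.
Proof.
pose a (t : 'I_n) := window th tl b t.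
transitivity (\sum_(0 <= s < (tl - th).+1) b s * ext a (th + s)).
  by rewrite sum_window_ext; apply: eq_bigr => t _; rewrite expr2.
apply: eq_big_nat => s /andP[_ lt_s]; rewrite expr2; congr (_ * _).
have lt_n : (th + s < n)%N by lia.
have le_tl : (th + s <= tl)%N by lia.
rewrite /ext; case: insubP => [t _ tE|]; last by rewrite lt_n.
by rewrite /a /window tE leq_addr le_tl addKn.
Qed.

Lemma haar_pad0_ext_add (u z : 'I_n -> R) (i : 'I_(padk th tl)) :
  (haar (padexp th tl) *m pad0 (ext (fun t => u t + z t)) th tl) i 0 =
  (haar (padexp th tl) *m pad0 (ext u) th tl) i 0 +
  \sum_(t < n) window th tl (centred_haar_row R th tl i) t * z t.
Proof.
rewrite -sum_window_ext !haar_pad0E // -big_split /=.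
by apply: eq_bigr => s _; rewrite ext_add mulrDr.
Qed.

End window_of_a_sample.

Lemma norm_soft_threshold_le (R : realFieldType) (lam c x : R) :
  0 <= lam -> 0 <= c ->
  (`|Num.sg x * Num.max (`|x| - lam) 0| <= c) = (`|x| <= lam + c).
Proof.
move=> lam_ge0 c_ge0; have [->|x_neq0] := eqVneq x 0.
  by rewrite sgr0 mul0r normr0 c_ge0 addr_ge0.
rewrite normrM normr_sg x_neq0 mul1r ger0_norm ?le_max ?lexx ?orbT //.
by rewrite ge_max c_ge0 andbT; apply/idP/idP => ?; lra.
Qed.

Lemma expR_tail_at_threshold (R : realType) (sigma beta : R) (n : nat) :
  0 < sigma -> 0 < beta -> (0 < n)%N ->
  expR (- ((sigma * Num.sqrt (beta * ln n%:R)) ^+ 2 / (2 * sigma ^+ 2))) =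
  n%:R `^ (- (beta / 2)).
Proof.
move=> sigma_gt0 beta_gt0 n_gt0.
have bl_ge0 : 0 <= beta * ln n%:R.
  by apply: mulr_ge0; [exact: ltW | apply: ln_ge0; rewrite ler1n].
rewrite /powR ifF; last by rewrite pnatr_eq0 eqn0Ngt n_gt0.
by congr expR; rewrite exprMn sqr_sqrtr //; field; rewrite gt_eqF.
Qed.

Theorem lemma3 (R : realType) (d : measure_display) (T : measurableType d)
  (P : probability T R) (n : nat) (theta : 'I_n -> R)
  (Z : 'I_n -> {RV P >-> R}) (sigma beta : R) :
  0 < sigma -> 0 < beta ->
  mutually_independent P (fun t => (Z t : T -> R)) ->
  (forall t, ('E_P[Z t] = 0)%E) ->
  (forall t, subgaussian P sigma (Z t)) ->
  forall th tl : nat, (th <= tl)%N -> (tl < n)%N ->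
  forall i : 'I_(padk th tl),
    let lam := sigma * Num.sqrt (beta * ln n%:R) in
    let H := @haar R (padexp th tl) in
    let Theta := pad0 (ext theta) th tl in
    (P [set w | let Y := pad0 (ext (fun t => (theta t + Z t w)%R)) th tl in
                (`|(soft lam (H *m Y)) i 0| <= `|(H *m Theta) i 0|)%R ]
     >= (1 - 2 * (n%:R `^ (3 - beta / 8)))%R%:E)%E.
Proof.
move=> sigma_gt0 beta_gt0 indepZ _ sgZ th tl le_th_tl lt_tl_n i; cbv zeta.
set lam := sigma * _; set u0 := (_ *m _) i 0.
pose a (t : 'I_n) := window th tl (centred_haar_row R th tl i) t.
have a_norm : \sum_t a t ^+ 2 <= 1.
  by rewrite sum_window_sqr //; exact: centred_haar_row_norm_le1.
have lam_ge0 : 0 <= lam by rewrite mulr_ge0 ?sqrtr_ge0 // ltW.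
rewrite (_ : [set w | _] = [set w | `|u0 + lincomb Z a w| <= lam + `|u0|]);
  last first.
  by apply/seteqP; split => w /=;
    rewrite mxE haar_pad0_ext_add // norm_soft_threshold_le.
apply: (@le_trans _ _ (P [set w | `|lincomb Z a w| <= lam])); last first.
  apply: le_measure; rewrite ?inE.
  - by apply: measurable_le_set => //; exact: measurableT_comp.
  - apply: measurable_le_set => //; apply: measurableT_comp => //.
    exact: measurable_funD.
  - by move=> w /= Xw; rewrite (le_trans (ler_normD _ _)) // addrC lerD2r.
apply: le_trans _ (subgaussian_abs_tail sigma_gt0 lam_ge0
  (subgaussian_lincomb indepZ sgZ a_norm)).
have n_gt0 : (0 < n)%N by lia.
have : n%:R `^ (- (beta / 2)) <= n%:R `^ (3 - beta / 8) :> R.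
  by apply: ler_powR; [rewrite ler1n | lra].
by rewrite /lam expR_tail_at_threshold // lee_fin; lra.
Qed.
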